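(* Let $(H,\partial)$ be a left Cartan–Eilenberg system, with left couple $(A',E^1,\alpha,\beta,\gamma)$. Then there is a natural isomorphism $$W'\xrightarrow{\ \cong\ }\ker(\kappa)$$ of internal degree $0$, where $W'=\operatorname{colim}_s\operatorname{Rlim}_rK_\infty\operatorname{im}^rA'_s$ is Boardman's whole-plane obstruction group of the left couple and $\kappa\colon\operatorname{colim}_j\lim_iH(i,j)\to\lim_i\operatorname{colim}_jH(i,j)$ is the interchange morphism of the underlying Cartan–Eilenberg system. (No convergence hypothesis is assumed.)
   Context: Let $R$ be a ring and $\mathcal{A}$ the abelian category of $\mathbb{Z}$-graded $R$-modules (grading = internal degree). For a linearly ordered set $\mathcal{I}$, an $\mathcal{I}$-system $(H,\partial)$ consists of objects $H(i,j)\in\mathcal{A}$ for $i\le j$ in $\mathcal{I}$, functorial morphisms $\eta\colon H(i,j)\to H(i',j')$ of internal degree $0$ for $i\le i'$, $j\le j'$, and natural morphisms $\partial\colon H(j,k)\to H(i,j)$ of internal degree $-1$ for $i\le j\le k$ (commuting with the $\eta$'s), such that $H(i,j)\xrightarrow{\eta}H(i,k)\xrightarrow{\eta}H(j,k)\xrightarrow{\partial}H(i,j)$ is exact at each vertex for all $i\le j\le k$. A Cartan–Eilenberg system is a $\mathbb{Z}$-system; a left Cartan–Eilenberg system is a $(\mathbb{Z}\cup\{-\infty\})$-system, $-\infty$ being the least element; its underlying Cartan–Eilenberg system is its restriction to $\mathbb{Z}$. The left couple of a left Cartan–Eilenberg system: $A'_s=H(-\infty,s)$, $E^1_s=H(s-1,s)$,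 $\alpha_s=\eta\colon H(-\infty,s-1)\to H(-\infty,s)$, $\beta_s=\eta\colon H(-\infty,s)\to H(s-1,s)$, $\gamma_s=\partial\colon H(s-1,s)\to H(-\infty,s-1)$. For a sequence $\cdots\to A_{s-1}\xrightarrow{\alpha}A_s\to\cdots$: $A_\infty=\operatorname{colim}_sA_s$ with structure maps $\iota_s$; $\operatorname{im}^rA_s=\operatorname{im}(\alpha^r\colon A_{s-r}\to A_s)$; $K_\infty\operatorname{im}^rA_s=\ker(\iota_s)\cap\operatorname{im}^rA_s$; $W=\operatorname{colim}_s\operatorname{Rlim}_rK_\infty\operatorname{im}^rA_s$, where $\operatorname{Rlim}=\lim^1$. Limits over $i$ are along $\eta\colon H(i-1,j)\to H(i,j)$ as $i\to-\infty$, colimits over $j$ along $\eta\colon H(i,j)\to H(i,j+1)$. The interchange morphism $\kappa$ is the canonical morphism whose restriction to $\lim_iH(i,j)$ followed by projection to $\operatorname{colim}_jH(i,j)$ is $\lim_iH(i,j)\to H(i,j)\to\operatorname{colim}_jH(i,j)$. *)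

(* Graded R-modules are modelled degreewise: an object of A is
   a family (M n)_{n : int} of left R-modules; a morphism of internal degree d
   is a family of R-linear maps M n -> N (n + d).  Limits, colimits and Rlim
   (= lim^1) of graded modules are computed degreewise, so everything below is
   stated for a fixed internal degree n.  Sequential colimits, limits and lim^1
   are represented concretely by representatives and their equivalence
   relations (the standard constructions in module categories). *)
From HB Require Import structures.
From mathcomp Require Import all_boot all_order all_algebra.
Set Implicit Arguments. Unset Strict Implicit. Unset Printing Implicit Defensive.
Import Order.TTheory GRing.Theory Num.Theory.
Local Open Scope ring_scope.

Inductive ext := NegInf | Fin of int.

Definition ele (x y : ext) : bool :=
  match x, y with
  | NegInf, _ => true
  | Fin _, NegInf => false
  | Fin a, Fin b => (a <= b)%R
  end.

Section Systems.
Variable R : pzRingType.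

(* H i j is only meaningful for ele i j; eta i j i' j' is the structure map
   H(i,j) -> H(i',j') (internal degree 0), del i j k : H(j,k) -> H(i,j) has
   internal degree -1. *)
Record LCE := {
  H : ext -> ext -> int -> lmodType R;
  eta : forall (i j i' j' : ext) (n : int), {linear H i j n -> H i' j' n};
  del : forall (i j k : ext) (n : int), {linear H j k n -> H i j (n - 1)};
  eta_id : forall i j n (x : H i j n), ele i j -> eta i j i j n x = x;
  eta_comp : forall i j i' j' i'' j'' n (x : H i j n),
    ele i j -> ele i' j' -> ele i'' j'' -> ele i i' -> ele j j' ->
    ele i' i'' -> ele j' j'' ->
    eta i' j' i'' j'' n (eta i j i' j' n x) = eta i j i'' j'' n x;
  del_nat : forall i j k i' j' k' n (x : H j k n),
    ele i j -> ele j k -> ele i' j' -> ele j' k' ->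
    ele i i' -> ele j j' -> ele k k' ->
    eta i j i' j' (n - 1) (del i j k n x) = del i' j' k' n (eta j k j' k' n x);
  (* exactness of H(i,j) -> H(i,k) -> H(j,k) -> H(i,j) at each vertex *)
  exact_ik : forall i j k n (y : H i k n), ele i j -> ele j k ->
    (eta i k j k n y = 0 <-> exists x : H i j n, eta i j i k n x = y);
  exact_jk : forall i j k n (y : H j k n), ele i j -> ele j k ->
    (del i j k n y = 0 <-> exists x : H i k n, eta i k j k n x = y);
  exact_ij : forall i j k n (y : H i j (n - 1)), ele i j -> ele j k ->
    (eta i j i k (n - 1) y = 0 <-> exists x : H j k n, del i j k n x = y)
}.

Record LCEMor (X Y : LCE) := {
  mor : forall i j n, {linear H X i j n -> H Y i j n};
  mor_eta : forall i j i' j' n (x : H X i j n),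
    ele i j -> ele i' j' -> ele i i' -> ele j j' ->
    mor i' j' n (eta X i j i' j' n x) = eta Y i j i' j' n (mor i j n x);
  mor_del : forall i j k n (x : H X j k n), ele i j -> ele j k ->
    mor i j (n - 1) (del X i j k n x) = del Y i j k n (mor j k n x)
}.

Unset Implicit Arguments.

Variable X : LCE.
Variable n : int.

Definition Aseq (s : int) := H X NegInf (Fin s) n.
(* the composite of alphas A'_s -> A'_t (t >= s), i.e. alpha^(t-s) = eta *)
Definition Atr (s t : int) : Aseq s -> Aseq t :=
  eta X NegInf (Fin s) NegInf (Fin t) n.

Definition imr (r : nat) (s : int) (x : Aseq s) : Prop :=
  exists y : Aseq (s - r%:Z), Atr (s - r%:Z) s y = x.

(* A'_oo = colim_s A'_s; elements are represented by pairs (s, x). *)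
Definition Ainf_eq (u v : {s : int & Aseq s}) : Prop :=
  exists t, projT1 u <= t /\ projT1 v <= t /\
    Atr (projT1 u) t (projT2 u) = Atr (projT1 v) t (projT2 v).
Definition ker_iota (s : int) (x : Aseq s) : Prop :=
  Ainf_eq (existT Aseq s x) (existT Aseq s 0).
Definition Kim (r : nat) (s : int) (x : Aseq s) : Prop := ker_iota s x /\ imr r s x.

(* Rlim_r of the tower (K_oo im^r A'_s)_r (maps = inclusions) is the cokernel of
   prod_r B_r -> prod_r B_r, (c_r) |-> (c_r - c_{r+1}).
   A representative of an element of W' is (s, b) with b r in K_oo im^r A'_s. *)
Definition WRep := {s : int & nat -> Aseq s}.
Definition Wvalid (w : WRep) : Prop := forall r, Kim r (projT1 w) (projT2 w r).
Definition rlim_eq (t : int) (b b' : nat -> Aseq t) : Prop :=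
  exists c : nat -> Aseq t, (forall r, Kim r t (c r)) /\
    (forall r, b r - b' r = c r - c r.+1).
Definition Weq (w w' : WRep) : Prop :=
  exists t, projT1 w <= t /\ projT1 w' <= t /\
    rlim_eq t (fun r => Atr (projT1 w) t (projT2 w r))
              (fun r => Atr (projT1 w') t (projT2 w' r)).
Definition Wadd (w w' : WRep) : WRep :=
  let m := Num.max (projT1 w) (projT1 w') in
  existT (fun s => nat -> Aseq s) m
    (fun r => Atr (projT1 w) m (projT2 w r) + Atr (projT1 w') m (projT2 w' r)).
Definition Wscale (a : R) (w : WRep) : WRep :=
  existT (fun s => nat -> Aseq s) (projT1 w) (fun r => a *: projT2 w r).

Definition LimRep (j : int) := forall i : int, H X (Fin i) (Fin j) n.
Definition lim_valid (j : int) (x : LimRep j) : Prop :=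
  forall i, i <= j ->
    eta X (Fin (i - 1)) (Fin j) (Fin i) (Fin j) n (x (i - 1)) = x i.
Definition lim_tr (j t : int) (x : LimRep j) : LimRep t :=
  fun i => eta X (Fin (Num.min i j)) (Fin j) (Fin i) (Fin t) n (x (Num.min i j)).

Definition CRep := {j : int & LimRep j}.
Definition Cvalid (c : CRep) : Prop := lim_valid (projT1 c) (projT2 c).
Definition Ceq (c c' : CRep) : Prop :=
  exists t, projT1 c <= t /\ projT1 c' <= t /\
    forall i, i <= t ->
      lim_tr (projT1 c) t (projT2 c) i = lim_tr (projT1 c') t (projT2 c') i.
Definition Cadd (c c' : CRep) : CRep :=
  let m := Num.max (projT1 c) (projT1 c') in
  existT LimRep m
    (fun i => lim_tr (projT1 c) m (projT2 c) i + lim_tr (projT1 c') m (projT2 c') i).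
Definition Cscale (a : R) (c : CRep) : CRep :=
  existT LimRep (projT1 c) (fun i => a *: projT2 c i).

Definition CoRep (i : int) := {j : int & H X (Fin i) (Fin j) n}.
Definition co_valid (i : int) (y : CoRep i) : Prop := i <= projT1 y.
Definition co_eq (i : int) (y y' : CoRep i) : Prop :=
  exists t, projT1 y <= t /\ projT1 y' <= t /\
    eta X (Fin i) (Fin (projT1 y)) (Fin i) (Fin t) n (projT2 y)
    = eta X (Fin i) (Fin (projT1 y')) (Fin i) (Fin t) n (projT2 y').
Definition co_shift (i : int) (y : CoRep (i - 1)) : CoRep i :=
  let m := Num.max i (projT1 y) in
  existT (fun j => H X (Fin i) (Fin j) n) m
    (eta X (Fin (i - 1)) (Fin (projT1 y)) (Fin i) (Fin m) n (projT2 y)).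
Definition LCRep := forall i : int, CoRep i.
Definition LCvalid (z : LCRep) : Prop :=
  forall i, co_valid i (z i) /\ co_eq i (co_shift i (z (i - 1))) (z i).
Definition LCeq (z z' : LCRep) : Prop := forall i, co_eq i (z i) (z' i).
Definition LCzero : LCRep := fun i => existT (fun j => H X (Fin i) (Fin j) n) i 0.

(* Its i-component on lim_i H(i,j) is lim_i H(i,j) -> H(i,j) -> colim_j H(i,j)
   (i <= j); for general i one first passes to level max i j. *)
Definition kappa (c : CRep) : LCRep :=
  fun i => let m := Num.max i (projT1 c) in
    existT (fun j => H X (Fin i) (Fin j) n) m (lim_tr (projT1 c) m (projT2 c) i).

Definition in_ker_kappa (c : CRep) : Prop := Cvalid c /\ LCeq (kappa c) LCzero.

Definition iso_W_kerkappa (F : WRep -> CRep) : Prop :=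
  (forall w, Wvalid w -> in_ker_kappa (F w)) /\
  (forall w w', Wvalid w -> Wvalid w' -> Weq w w' -> Ceq (F w) (F w')) /\
  (forall w w', Wvalid w -> Wvalid w' -> Ceq (F (Wadd w w')) (Cadd (F w) (F w'))) /\
  (forall a w, Wvalid w -> Ceq (F (Wscale a w)) (Cscale a (F w))) /\
  (forall w w', Wvalid w -> Wvalid w' -> Ceq (F w) (F w') -> Weq w w') /\
  (forall c, in_ker_kappa c -> exists2 w, Wvalid w & Ceq (F w) c).

End Systems.

Arguments Atr {R X n}. Arguments imr {R X n}. Arguments Ainf_eq {R X n}.
Arguments ker_iota {R X n}. Arguments Kim {R X n}. Arguments WRep {R}.
Arguments Wvalid {R X n}. Arguments rlim_eq {R X n}. Arguments Weq {R X n}.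
Arguments Wadd {R X n}. Arguments Wscale {R X n}. Arguments LimRep {R}.
Arguments lim_valid {R X n}. Arguments lim_tr {R X n}. Arguments CRep {R}.
Arguments Cvalid {R X n}. Arguments Ceq {R X n}. Arguments Cadd {R X n}.
Arguments Cscale {R X n}. Arguments CoRep {R}. Arguments co_valid {R X n}.
Arguments co_eq {R X n}. Arguments co_shift {R X n}. Arguments LCRep {R}.
Arguments LCvalid {R X n}. Arguments LCeq {R X n}. Arguments LCzero {R X n}.
Arguments kappa {R X n}. Arguments in_ker_kappa {R X n}.
Arguments iso_W_kerkappa {R X n}. Arguments Aseq {R}.

Definition Wmap {R : pzRingType} {X Y : LCE R} (f : LCEMor X Y) {n : int}
  (w : WRep X n) : WRep Y n :=
  existT (fun s => nat -> Aseq Y n s) (projT1 w)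
    (fun r => mor f NegInf (Fin (projT1 w)) n (projT2 w r)).
Definition Cmap {R : pzRingType} {X Y : LCE R} (f : LCEMor X Y) {n : int}
  (c : CRep X n) : CRep Y n :=
  existT (LimRep Y n) (projT1 c)
    (fun i => mor f (Fin i) (Fin (projT1 c)) n (projT2 c i)).

From HB Require Import structures.
From Stdlib Require Import IndefiniteDescription.
From mathcomp Require Import all_boot all_order all_algebra zify.
Set Implicit Arguments. Unset Strict Implicit. Unset Printing Implicit Defensive.
Import Order.TTheory GRing.Theory Num.Theory.
Local Open Scope ring_scope.

(* A class of W' at level s is a sequence (b_r) with b_r in ker(iota_s) and
   in im^r A'_s.  Send it to the family whose i-component is the image of
   b_0 + ... + b_(s-i-1) in H(i,s).  The terms with r >= s - i contribute
   nothing, since b_r comes from A'_(s-r) and H(-oo,s-r) -> H(i,s) factors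
   through H(s-r,s-r) = 0; hence the family is compatible, and it lies in
   ker(kappa) because every b_r dies in A'_oo.  An Rlim-boundary
   (c_r - c_(r+1)) changes the partial sums by a telescoping term, which makes
   the map well defined.  Exactness of H(-oo,i) -> H(-oo,j) -> H(i,j) turns
   equality of images back into the Rlim relation (injectivity), and lifting
   the components of an element of ker(kappa) to ker(iota_j) and taking
   successive differences gives a preimage (surjectivity). *)

HB.instance Definition _ (R : pzRingType) (X : LCE R) (n s t : int) :=
  GRing.Linear.copy (@Atr R X n s t) (eta X NegInf (Fin s) NegInf (Fin t) n).

Section WholePlaneObstruction.
Variables (R : pzRingType) (X : LCE R) (n : int).

Lemma H_diag_eq0 a (x : H X (Fin a) (Fin a) n) : x = 0.
Proof.
have ea : ele (Fin a) (Fin a) by rewrite /= lexx.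
have := @exact_ik _ X (Fin a) (Fin a) (Fin a) n x ea ea.
rewrite eta_id // => ->.
by exists x; rewrite eta_id.
Qed.

Lemma eta_through_diag_eq0 (p : ext) (k i j : int) (y : H X p (Fin k) n) :
  ele p (Fin k) -> k <= i -> i <= j ->
  eta X p (Fin k) (Fin i) (Fin j) n y = 0.
Proof.
move=> hp hki hij.
rewrite -(@eta_comp _ X p (Fin k) (Fin k) (Fin k)) //=; last by lia.
by rewrite (H_diag_eq0 (eta X p (Fin k) (Fin k) (Fin k) n y)) raddf0.
Qed.

Lemma Atr_id s (x : Aseq X n s) : Atr s s x = x.
Proof. by rewrite /Atr eta_id. Qed.

Lemma Atr_comp s t u (x : Aseq X n s) : s <= t -> t <= u ->
  Atr t u (Atr s t x) = Atr s u x.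
Proof. by move=> hst htu; rewrite /Atr eta_comp //=; lia. Qed.

Lemma eta_Atr s t i (x : Aseq X n s) : s <= t -> i <= t ->
  eta X NegInf (Fin t) (Fin i) (Fin t) n (Atr s t x) =
  eta X NegInf (Fin s) (Fin i) (Fin t) n x.
Proof. by move=> hst hit; rewrite /Atr eta_comp //=; lia. Qed.

Lemma eta_Atr_imr_eq0 k u t i (y : Aseq X n u) :
  imr k u y -> u <= t -> i <= t -> u - k%:Z <= i ->
  eta X NegInf (Fin t) (Fin i) (Fin t) n (Atr u t y) = 0.
Proof.
move=> [z <-] hut hit hki.
rewrite Atr_comp ?eta_Atr; [|lia|lia|lia|lia].
exact: eta_through_diag_eq0.
Qed.

Lemma imrD k s (x y : Aseq X n s) : imr k s x -> imr k s y -> imr k s (x + y).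
Proof. by move=> [a <-] [b <-]; exists (a + b); rewrite raddfD. Qed.

Lemma imrN k s (x : Aseq X n s) : imr k s x -> imr k s (- x).
Proof. by move=> [a <-]; exists (- a); rewrite raddfN. Qed.

Lemma imr_Atr k s t (x : Aseq X n s) : s <= t -> imr k s x -> imr k t (Atr s t x).
Proof.
move=> hst [a <-]; exists (Atr (s - k%:Z) (t - k%:Z) a).
by rewrite !Atr_comp //; lia.
Qed.

Lemma ker_iotaP s (x : Aseq X n s) :
  ker_iota s x <-> exists t, s <= t /\ Atr s t x = 0.
Proof.
rewrite /ker_iota /Ainf_eq /=; split.
  by move=> [t [hst [_ e]]]; exists t; rewrite e raddf0.
by move=> [t [hst e]]; exists t; rewrite e raddf0.
Qed.

Lemma ker_iota0 s : ker_iota s (0 : Aseq X n s).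
Proof. by apply/ker_iotaP; exists s; rewrite lexx raddf0. Qed.

Lemma ker_iotaD s (x y : Aseq X n s) :
  ker_iota s x -> ker_iota s y -> ker_iota s (x + y).
Proof.
move=> /ker_iotaP [t1 [h1 e1]] /ker_iotaP [t2 [h2 e2]]; apply/ker_iotaP.
exists (Num.max t1 t2); split; first lia.
rewrite raddfD /= -(@Atr_comp s t1) -1?(@Atr_comp s t2 _ y) ?e1 ?e2 //; try lia.
by rewrite !raddf0 addr0.
Qed.

Lemma ker_iotaN s (x : Aseq X n s) : ker_iota s x -> ker_iota s (- x).
Proof.
by move=> /ker_iotaP [t [h e]]; apply/ker_iotaP; exists t; rewrite raddfN /= e oppr0.
Qed.

Lemma ker_iota_sum s (b : nat -> Aseq X n s) N :
  (forall k, ker_iota s (b k)) -> ker_iota s (\sum_(0 <= k < N) b k).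
Proof.
move=> hb; apply: (big_ind (ker_iota s)) => //; first exact: ker_iota0.
exact: ker_iotaD.
Qed.

Lemma ker_iota_Atr s t (x : Aseq X n s) :
  s <= t -> ker_iota s x -> ker_iota t (Atr s t x).
Proof.
move=> hst /ker_iotaP [u [hsu e]]; apply/ker_iotaP.
exists (Num.max t u); split; first lia.
by rewrite Atr_comp -1?(@Atr_comp s u) ?e ?raddf0 //; lia.
Qed.

Lemma Wvalid_imr s (b : nat -> Aseq X n s) :
  Wvalid (existT _ s b) -> forall k, imr k s (b k).
Proof. by move=> hw k; case: (hw k). Qed.

Lemma lim_tr_id t (y : LimRep X n t) i : i <= t -> lim_tr t t y i = y i.
Proof. by move=> hit; rewrite /lim_tr (min_l hit) eta_id //=. Qed.

(* The components with i > s are junk: only i <= s is ever inspected. *)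
Definition W_to_kerkappa (w : WRep X n) : CRep X n :=
  existT (LimRep X n) (projT1 w) (fun i => eta X NegInf (Fin (projT1 w)) (Fin i)
     (Fin (projT1 w)) n (\sum_(0 <= k < `|projT1 w - i|%N) projT2 w k)).

Lemma lim_tr_W_to_kerkappa s (b : nat -> Aseq X n s) t i :
  s <= t -> i <= t -> (forall k, imr k s (b k)) ->
  lim_tr s t (projT2 (W_to_kerkappa (existT _ s b))) i =
  \sum_(0 <= k < `|t - i|%N) eta X NegInf (Fin t) (Fin i) (Fin t) n (Atr s t (b k)).
Proof.
move=> hst hit hb; rewrite /lim_tr /=.
have tail_eq0 k : s - k%:Z <= i ->
    eta X NegInf (Fin t) (Fin i) (Fin t) n (Atr s t (b k)) = 0.
  by move=> hk; apply: (eta_Atr_imr_eq0 (hb k)).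
case: (lerP i s) => his.
  rewrite eta_comp /=; [|lia|lia|lia|lia|lia|lia|lia].
  rewrite linear_sum [RHS](big_cat_nat _ (n := `|s - i|%N)) /=; [|lia|lia].
  rewrite [X in _ = _ + X]big_nat_cond [X in _ = _ + X]big1 ?addr0; last first.
    by move=> k /andP[/andP[hk _] _]; apply: tail_eq0; lia.
  by apply: eq_bigr => k _; rewrite eta_Atr.
rewrite eta_through_diag_eq0 /=; [|lia|lia|lia].
by rewrite big_nat_cond big1 // => k _; apply: tail_eq0; lia.
Qed.

Lemma W_to_kerkappa_in_ker (w : WRep X n) : Wvalid w -> in_ker_kappa (W_to_kerkappa w).
Proof.
case: w => s b hw; have hb := Wvalid_imr hw.
have hk k : ker_iota s (b k) by case: (hw k).
split.
  move=> i /= his; rewrite eta_comp /=; [|done|lia|lia|done|lia|lia|lia].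
  have -> : `|(s - (i - 1))%R|%N = (`|(s - i)%R|%N).+1 by lia.
  rewrite big_nat_recr //= raddfD /= -[b `|(s - i)%R|%N]Atr_id.
  by rewrite (eta_Atr_imr_eq0 (hb _)) ?addr0 //; lia.
move=> i; rewrite /co_eq /kappa /LCzero /=.
set m := Num.max i s.
have hsm : s <= m by lia.
have him : i <= m by lia.
rewrite (lim_tr_W_to_kerkappa hsm him hb) -linear_sum -linear_sum.
have /ker_iotaP [u [hu e]] := ker_iota_sum `|(m - i)%R|%N hk.
exists (Num.max u m); split; first lia; split; first lia.
rewrite raddf0 eta_comp /=; [|lia|lia|lia|lia|lia|lia|lia].
rewrite -eta_Atr ?Atr_comp -1?(@Atr_comp s u) ?e ?raddf0 //; lia.
Qed.

Lemma W_to_kerkappa_compat (w w' : WRep X n) : Wvalid w -> Wvalid w' ->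
  Weq w w' -> Ceq (W_to_kerkappa w) (W_to_kerkappa w').
Proof.
case: w => s b hw; case: w' => s' b' hw'.
have hb := Wvalid_imr hw; have hb' := Wvalid_imr hw'.
move=> [t [hst [hs't [c [hc e]]]]] /=; rewrite /= in hst hs't e.
have [/ker_iotaP [u [htu c0_eq0]] _] := hc 0%N.
exists u => /=; split; first lia; split; first lia.
move=> i hiu.
rewrite (lim_tr_W_to_kerkappa (s := s)) ?(lim_tr_W_to_kerkappa (s := s')) //; [|lia|lia].
apply/eqP; rewrite -subr_eq0 -sumrB; apply/eqP.
set E := eta X NegInf (Fin u) (Fin i) (Fin u) n.
pose f k := E (Atr t u (c k)).
have telescope k : E (Atr s u (b k)) - E (Atr s' u (b' k)) = - (f k.+1 - f k).
  rewrite opprB /f -(@Atr_comp s t u (b k)); [|lia|lia].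
  rewrite -(@Atr_comp s' t u (b' k)); [|lia|lia].
  by rewrite -!raddfB /= e.
under eq_bigr => k _ do rewrite telescope.
rewrite sumrN telescope_sumr // /f c0_eq0 raddf0 subr0.
have [_ hcN] := hc `|(u - i)%R|%N.
by rewrite (eta_Atr_imr_eq0 hcN) ?oppr0 //; lia.
Qed.

Lemma W_to_kerkappaD (w w' : WRep X n) : Wvalid w -> Wvalid w' ->
  Ceq (W_to_kerkappa (Wadd w w')) (Cadd (W_to_kerkappa w) (W_to_kerkappa w')).
Proof.
case: w => s b hw; case: w' => s' b' hw'.
have hb := Wvalid_imr hw; have hb' := Wvalid_imr hw'.
rewrite /Ceq /Wadd /Cadd /=; set m := Num.max s s'.
have hsm : s <= m by lia.
have hs'm : s' <= m by lia.
exists m; split; first exact: lexx; split; first exact: lexx.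
move=> i hi.
rewrite [RHS]lim_tr_id // (lim_tr_W_to_kerkappa (s := m)) //; last first.
  by move=> k; apply: imrD; apply: imr_Atr.
rewrite (lim_tr_W_to_kerkappa (s := s)) ?(lim_tr_W_to_kerkappa (s := s')) //.
by rewrite -big_split /=; apply: eq_bigr => k _; rewrite Atr_id raddfD.
Qed.

Lemma W_to_kerkappaZ a (w : WRep X n) :
  Ceq (W_to_kerkappa (Wscale a w)) (Cscale a (W_to_kerkappa w)).
Proof.
case: w => s b; exists s; split; first exact: lexx; split; first exact: lexx.
by move=> i hi; rewrite !lim_tr_id //= -linearZ /= scaler_sumr.
Qed.

Lemma W_to_kerkappa_inj (w w' : WRep X n) : Wvalid w -> Wvalid w' ->
  Ceq (W_to_kerkappa w) (W_to_kerkappa w') -> Weq w w'.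
Proof.
case: w => s b hw; case: w' => s' b' hw'.
have hb := Wvalid_imr hw; have hb' := Wvalid_imr hw'.
move=> [t [hst [hs't he]]]; rewrite /= in hst hs't he.
exists t; split; first exact: hst; split; first exact: hs't.
pose B k := Atr s t (b k) - Atr s' t (b' k).
(* -(B_0 + ... + B_(r-1)) is in im^r: its image in H(t-r,t) is the difference
   of the two (t-r)-components. *)
exists (fun r => - \sum_(0 <= k < r) B k); split; last first.
  by move=> r; rewrite big_nat_recr //= opprK addKr.
move=> r; split.
  apply/ker_iotaN/ker_iota_sum => k; apply: ker_iotaD; last apply: ker_iotaN.
    by apply: ker_iota_Atr => //; case: (hw k).
  by apply: ker_iota_Atr => //; case: (hw' k).
apply: imrN.
have hrt : t - r%:Z <= t by lia.
have := he _ hrt; rewrite (lim_tr_W_to_kerkappa (s := s)) ?(lim_tr_W_to_kerkappa (s := s')) //.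
have -> : `|(t - (t - r%:Z))%R|%N = r by lia.
move/eqP; rewrite -subr_eq0 -sumrB.
under eq_bigr => k _ do rewrite -raddfB.
rewrite -linear_sum => /eqP.
have e1 : ele NegInf (Fin (t - r%:Z)) by [].
have e2 : ele (Fin (t - r%:Z)) (Fin t) by rewrite /= hrt.
by move/(@exact_ik _ X _ _ _ _ _ e1 e2) => [x hx]; exists x.
Qed.

(* kappa(x)_i = 0 means x_i dies in some H(i,t), so del x_i = 0 and x_i lifts
   to H(-oo,j); the lift is then corrected by an element of the image of
   A'_i so that it dies in A'_t. *)
Lemma ker_kappa_lift j (x : LimRep X n j) i : i <= j ->
  co_eq i (kappa (existT (LimRep X n) j x) i) (LCzero i) ->
  exists a : Aseq X n j,
    eta X NegInf (Fin j) (Fin i) (Fin j) n a = x i /\ ker_iota j a.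
Proof.
move=> hij; rewrite /co_eq /kappa /LCzero /= (max_r hij) => -[t [hjt [hit]]].
rewrite lim_tr_id // raddf0 => x_i_dies.
have eNi : ele NegInf (Fin i) by [].
have eij : ele (Fin i) (Fin j) by rewrite /= hij.
have eit : ele (Fin i) (Fin t) by rewrite /= hit.
have del_eq0 : del X NegInf (Fin i) (Fin j) n (x i) = 0.
  have := @del_nat _ X NegInf (Fin i) (Fin j) NegInf (Fin i) (Fin t) n (x i).
  by rewrite eta_id // x_i_dies raddf0 => -> //=.
have [a0 ha0] := proj1 (@exact_jk _ X NegInf (Fin i) (Fin j) n (x i) eNi eij) del_eq0.
have a0_dies : eta X NegInf (Fin t) (Fin i) (Fin t) n (Atr j t a0) = 0.
  by rewrite eta_Atr // -(@eta_comp _ X NegInf (Fin j) (Fin i) (Fin j)) //= ha0.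
have [z hz] := proj1 (@exact_ik _ X NegInf (Fin i) (Fin t) n (Atr j t a0) eNi eit) a0_dies.
exists (a0 - Atr i j z); split.
  by rewrite linearB ha0 eta_Atr // eta_through_diag_eq0 ?subr0.
apply/ker_iotaP; exists t; split => //.
by rewrite raddfB /= Atr_comp // /Atr hz subrr.
Qed.

Lemma W_to_kerkappa_surj (c : CRep X n) :
  in_ker_kappa c -> exists2 w, Wvalid w & Ceq (W_to_kerkappa w) c.
Proof.
case: c => j x [hv hk]; rewrite /Cvalid /lim_valid /= in hv.
have lift (r : nat) : exists a : Aseq X n j,
    eta X NegInf (Fin j) (Fin (j - r%:Z)) (Fin j) n a = x (j - r%:Z) /\ ker_iota j a.
  by apply: ker_kappa_lift; [lia | apply: hk].
have [af haf] := functional_choice _ lift.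
pose a r := if r is 0 then (0 : Aseq X n j) else af r.
have ha r : ker_iota j (a r) by case: r => [|r]; [exact: ker_iota0 | case: (haf r.+1)].
pose b k := a k.+1 - a k.
exists (existT _ j b).
  move=> k; split; first by apply: ker_iotaD; [|apply: ker_iotaN].
  (* by compatibility of x, b_k vanishes in H(j-k,j), so lies in im^k *)
  have b_dies : eta X NegInf (Fin j) (Fin (j - k%:Z)) (Fin j) n (b k) = 0.
    case: k => [|k]; first by rewrite subr0; apply: H_diag_eq0.
    rewrite /b /= linearB (proj1 (haf k.+1)).
    rewrite -(@eta_comp _ X NegInf (Fin j) (Fin (j - (k.+2)%:Z)) (Fin j)) /=;
      [|done|lia|lia|done|lia|lia|lia].
    have := hv (j - (k.+1)%:Z) ltac:(lia).
    have -> : j - (k.+1)%:Z - 1 = j - (k.+2)%:Z by lia.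
    by rewrite (proj1 (haf k.+2)) => ->; rewrite subrr.
  have e1 : ele NegInf (Fin (j - k%:Z)) by [].
  have e2 : ele (Fin (j - k%:Z)) (Fin j) by rewrite /=; lia.
  by move: b_dies => /(@exact_ik _ X _ _ _ _ _ e1 e2) [y hy]; exists y.
exists j; split; first exact: lexx; split; first exact: lexx.
move=> i hi /=; rewrite !lim_tr_id //= /b telescope_sumr // subr0.
case eN : `|(j - i)%R|%N => [|r].
  have -> : i = j by lia.
  by rewrite [RHS]H_diag_eq0; apply: H_diag_eq0.
have <- : j - (r.+1)%:Z = i by lia.
exact: (proj1 (haf r.+1)).
Qed.

End WholePlaneObstruction.

Lemma W_to_kerkappa_natural (R : pzRingType) (X Y : LCE R) (f : LCEMor X Y)
  (n : int) (w : WRep X n) :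
  Ceq (W_to_kerkappa (Wmap f w)) (Cmap f (W_to_kerkappa w)).
Proof.
case: w => s b; exists s; split; first exact: lexx; split; first exact: lexx.
by move=> i hi; rewrite !lim_tr_id //= mor_eta //= [in RHS]linear_sum.
Qed.

Theorem theorem7p4 (R : pzRingType) :
  exists Phi : forall (X : LCE R) (n : int), WRep X n -> CRep X n,
    (forall (X : LCE R) (n : int), iso_W_kerkappa (Phi X n)) /\
    (forall (X Y : LCE R) (f : LCEMor X Y) (n : int) (w : WRep X n),
       Wvalid w -> Ceq (Phi Y n (Wmap f w)) (Cmap f (Phi X n w))).
Proof.
exists (fun X n => @W_to_kerkappa R X n); split=> [X n|X Y f n w _].
  split; first exact: W_to_kerkappa_in_ker.
  split; first exact: W_to_kerkappa_compat.
  split; first exact: W_to_kerkappaD.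
  split; first by move=> a w _; apply: W_to_kerkappaZ.
  split; first exact: W_to_kerkappa_inj.
  exact: W_to_kerkappa_surj.
exact: W_to_kerkappa_natural.
Qed.
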